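(* For every integer $c\ge 3$ and every instance with two groups of binary agents, there exists an allocation that is 1-out-of-$c$ MMS-fair for at least a $1-1/2^{c-1}$ fraction of the agents in each group.
   Context: There is a finite set $G$ of goods and two groups $A_1,A_2$ of agents, $n_i\ge1$ agents in $A_i$. A binary agent has an additive utility with $u_a(\{g\})\in\{0,1\}$. An allocation is a partition $(G_1,G_2)$ of $G$; agents of $A_i$ get $u_a(G_i)$. For an integer $c$, $\mathrm{MMS}^c_a(G)$ is the maximum, over partitions of $G$ into $c$ sets, of the minimum of $u_a$ over the sets. The allocation is 1-out-of-$c$ MMS-fair for $a\in A_i$ if $u_a(G_i)\ge \mathrm{MMS}^c_a(G)$; for a binary agent desiring $r$ goods this means $G_i$ contains at least $\lfloor r/c\rfloor$ goods she desires. *)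

From mathcomp Require Import all_boot.
Set Implicit Arguments. Unset Strict Implicit. Unset Printing Implicit Defensive.

Definition util (G : finType) (u : G -> nat) (S : {set G}) : nat :=
  \sum_(g in S) u g.

Definition binary (G : finType) (u : G -> nat) : Prop := forall g, u g <= 1.

(* A partition of G into c (possibly empty) sets is a map f : G -> 'I_c;
   bundle j is [set g | f g == j]. The minimum over the c bundles is taken
   with neutral element u(G), which bounds every bundle value. *)
Definition min_bundle (G : finType) (c : nat) (u : G -> nat)
  (f : {ffun G -> 'I_c}) : nat :=
  \big[minn/util u [set: G]]_(j < c) util u [set g | f g == j].

Definition mms (G : finType) (c : nat) (u : G -> nat) : nat :=
  \max_(f : {ffun G -> 'I_c}) min_bundle u f.

Definition mms_fair (G : finType) (c : nat) (u : G -> nat) (S : {set G}) : bool :=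
  mms c u <= util u S.

From mathcomp Require Import all_boot zify.

Set Implicit Arguments.
Unset Strict Implicit.
Unset Printing Implicit Defensive.

(* Give the first group a uniformly random subset S of G. An agent desiring r goods
   has MMS value at most r %/ c, so she can only fail when S holds fewer than r %/ c
   of her r goods: this is the event Bin(r, 1/2) < r %/ c, of probability at most
   2^-c. The same holds for the second group, which receives ~: S. Weighting the
   failures of the two groups by 1/n1 and 1/n2, some S is at most twice as bad as
   the mean, so in each group at most a 2 * 2^-c = 1/2^(c-1) fraction fails.
   The tail bound reduces to r = c * m and follows by induction on m: c more fair
   coins and one more required success multiply the tail count by at most 2^c,
   because 2c + 1 <= 2^c for c >= 3. *)

Definition binom_lt (r j : nat) : nat := \sum_(i < j) 'C(r, i).

Lemma binom_lt0 r : binom_lt r 0 = 0.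
Proof. exact: big_ord0. Qed.

Lemma binom_ltS r j : binom_lt r j.+1 = binom_lt r j + 'C(r, j).
Proof. exact: big_ord_recr. Qed.

Lemma binom_lt_pascal r j : binom_lt r.+1 j = binom_lt r j + binom_lt r j.-1.
Proof.
case: j => [|j]; first by rewrite !binom_lt0.
rewrite /binom_lt !big_ord_recl !bin0 -addnA; congr (_ + _).
by rewrite -big_split; apply: eq_bigr => i _; rewrite binS.
Qed.

Lemma binom_lt_pred_le r j : binom_lt r j.-1 <= binom_lt r j.
Proof. by case: j => [|j] //; rewrite binom_ltS leq_addr. Qed.

Lemma binom_lt_addl k r j : binom_lt (k + r) j <= 2 ^ k * binom_lt r j.
Proof.
elim: k j => [|k IH] j; first by rewrite mul1n.
rewrite addSn binom_lt_pascal expnS -mulnA mul2n -addnn.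
apply: leq_add; first exact: IH.
by apply: leq_trans (IH _) _; rewrite leq_mul2l binom_lt_pred_le orbT.
Qed.

(* Sort the subsets by how many of the c added elements they contain: none, one, or
   at least two. *)
Lemma binom_lt_addl_split c r j :
  binom_lt (c + r) j.+1
    <= binom_lt r j.+1 + c * binom_lt r j + (2 ^ c - 1 - c) * binom_lt r j.-1.
Proof.
elim: c j => [|c IH] j; first by rewrite add0n; lia.
have c_lt_exp2 := ltn_expl c (ltnSn 1).
have coarse : binom_lt (c + r) j <= binom_lt r j + (2 ^ c - 1) * binom_lt r j.-1.
  case: j => [|j]; first by rewrite binom_lt0.
  rewrite (_ : 2 ^ c - 1 = c + (2 ^ c - 1 - c)) ?mulnDl ?addnA; last by lia.
  apply: leq_trans (IH j) _; rewrite leq_add2l leq_mul2l.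
  by rewrite binom_lt_pred_le orbT.
rewrite addSn binom_lt_pascal /=.
rewrite (_ : 2 ^ c.+1 - 1 - c.+1 = (2 ^ c - 1 - c) + (2 ^ c - 1)); last by rewrite expnS; lia.
by have := IH j; rewrite mulnDl mulSn; lia.
Qed.

Lemma bin_mul_succ_le c m : 'C(c * m.+1, m.+1) <= c * 'C(c * m.+1, m).
Proof.
rewrite -(leq_pmul2l (ltn0Sn m)) mul_bin_left mulnA.
by rewrite leq_mul2r [m.+1 * c]mulnC leq_subr orbT.
Qed.

Lemma double_ltn_exp2 c : 3 <= c -> 2 * c < 2 ^ c.
Proof.
elim: c => [|c IH] //; rewrite leq_eqVlt => /orP [/eqP <- //| c_gt3].
by rewrite expnS; have := IH c_gt3; lia.
Qed.

Lemma binom_lt_step c m : 3 <= c ->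
  binom_lt (c + c * m.+1) m.+2 <= 2 ^ c * binom_lt (c * m.+1) m.+1.
Proof.
move=> c_ge3; have := binom_lt_addl_split c (c * m.+1) m.+1.
have := double_ltn_exp2 c_ge3; have := bin_mul_succ_le c m.
rewrite !binom_ltS /=; nia.
Qed.

Lemma binom_lt_mul_le c m : 3 <= c ->
  2 ^ c * binom_lt (c * m.+1) m.+1 <= 2 ^ (c * m.+1).
Proof.
move=> c_ge3; elim: m => [|m IH].
  by rewrite muln1 binom_ltS binom_lt0 bin0 muln1.
rewrite mulnS expnD; apply: leq_trans (leq_mul (leqnn _) IH).
by rewrite leq_mul2l binom_lt_step ?orbT.
Qed.

Lemma binom_lt_div_le c r : 3 <= c -> 2 ^ c * binom_lt r (r %/ c) <= 2 ^ r.
Proof.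
move=> c_ge3; case r_div: (r %/ c) => [|m]; first by rewrite binom_lt0 muln0.
have -> : r = r %% c + c * m.+1 by rewrite {1}(divn_eq r c) r_div mulnC addnC.
rewrite expnD; apply: leq_trans (leq_mul (leqnn _) (binom_lt_addl _ _ _)) _.
by rewrite mulnCA leq_mul2l binom_lt_mul_le ?orbT.
Qed.

Lemma sum_ord_eqn (k j : nat) : \sum_(i < j) (k == i : nat) = (k < j).
Proof.
elim: j => [|j IH]; first by rewrite big_ord0.
by rewrite big_ord_recr /= IH ltnS (leq_eqVlt k); case: ltngtP.
Qed.

Lemma sum_subsets_lt_card (T : finType) (A : {set T}) (j : nat) :
  \sum_(X : {set T} | X \subset A) (#|X| < j) = binom_lt #|A| j.
Proof.
rewrite /binom_lt; under [RHS]eq_bigr => i _ do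
  rewrite -cards_draws -sum1dep_card big_mkcondr.
rewrite exchange_big /=; apply: eq_bigr => X _.
by rewrite -sum_ord_eqn.
Qed.

Lemma setUID_pair (T : finType) (D X Y : {set T}) :
  X \subset D -> Y \subset ~: D -> ((X :|: Y) :&: D, (X :|: Y) :\: D) = (X, Y).
Proof.
move=> XD YD.
have /eqP YD0 : Y :&: D == set0 by rewrite setI_eq0 disjoints_subset.
have /eqP XD0 : X :\: D == set0 by rewrite setD_eq0.
have /setDidPl YDY : [disjoint Y & D] by rewrite disjoints_subset.
by rewrite setIUl (setIidPl XD) YD0 setU0 setDUl XD0 YDY set0U.
Qed.

Lemma sum_set_split (T : finType) (D : {set T}) (F : {set T} -> nat) :
  \sum_(S : {set T}) F S =
  \sum_(X : {set T} | X \subset D) \sum_(Y : {set T} | Y \subset ~: D) F (X :|: Y).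
Proof.
rewrite pair_big_dep (reindex_onto (fun p => p.1 :|: p.2) (fun S => (S :&: D, S :\: D))) /=;
  last by move=> S _; rewrite setID.
apply: eq_bigl => -[X Y] /=; apply/eqP/andP => [[<- <-]|[XD YD]].
  by rewrite subsetIr setDE subsetIr.
exact: setUID_pair.
Qed.

Lemma sum_card_setI_lt (T : finType) (D : {set T}) (j : nat) :
  \sum_(S : {set T}) (#|S :&: D| < j) = 2 ^ #|~: D| * binom_lt #|D| j.
Proof.
rewrite (sum_set_split D) -sum_subsets_lt_card big_distrr /=.
apply: eq_bigr => X XD.
under eq_bigr => Y YD do rewrite [_ :&: D](congr1 fst (setUID_pair XD YD)).
by rewrite /= sum_nat_cond_const -card_powerset.
Qed.

Lemma leq_mul_bigmin c x (F : 'I_c -> nat) :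
  c * \big[minn/x]_(j < c) F j <= \sum_(j < c) F j.
Proof.
elim: c F => [|c IH] F; first by rewrite mul0n.
rewrite mulSn !big_ord_recl /=; apply: leq_add; first exact: geq_minl.
by apply: leq_trans (IH _); rewrite leq_mul2l geq_minr orbT.
Qed.

Lemma mms_leq_div (G : finType) c (u : G -> nat) : 0 < c ->
  mms c u <= util u [set: G] %/ c.
Proof.
move=> c_gt0; apply/bigmax_leqP => f _; rewrite leq_divRL // mulnC /min_bundle.
apply: leq_trans (leq_mul_bigmin _ _) _.
rewrite /util (partition_big f predT) //=; apply: leq_sum => j _.
rewrite big_mkcond [X in _ <= X]big_mkcond /=.
by apply: leq_sum => g _; rewrite !inE; case: (f g == j).
Qed.

Lemma util_binary (G : finType) (u : G -> nat) (S : {set G}) : binary u ->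
  util u S = #|S :&: [set g | u g == 1]|.
Proof.
move=> u_bin; rewrite /util (big_setID [set g | u g == 1]) /= [X in _ + X]big1 ?addn0.
  by rewrite -sum1_card; apply: eq_bigr => g /setIP [_]; rewrite inE => /eqP.
by move=> g /setDP [_]; rewrite inE; have := u_bin g; case: (u g) => [|[|]].
Qed.

Lemma unfair_binary_lt (G : finType) c (u : G -> nat) (S : {set G}) :
  0 < c -> binary u -> ~~ mms_fair c u S ->
  #|S :&: [set g | u g == 1]| < #|[set g | u g == 1]| %/ c.
Proof.
move=> c_gt0 u_bin; rewrite /mms_fair -ltnNge -(util_binary S u_bin) => unfair.
by apply: leq_trans unfair (leq_trans (mms_leq_div u c_gt0) _); rewrite util_binary // setTI.
Qed.

Lemma sum_unfair_sets_le (G : finType) c (u : G -> nat) : 3 <= c -> binary u ->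
  2 ^ c * \sum_(S : {set G}) (~~ mms_fair c u S) <= 2 ^ #|G|.
Proof.
move=> c_ge3 u_bin; have c_gt0 : 0 < c by apply: leq_trans c_ge3.
set D := [set g | u g == 1]; rewrite -(cardsC D) addnC expnD.
apply: leq_trans (_ : 2 ^ c * \sum_(S : {set G}) (#|S :&: D| < #|D| %/ c) <= _).
  rewrite leq_mul2l; apply/orP; right; apply: leq_sum => S _.
  by case: (boolP (mms_fair c u S)) => //= /(unfair_binary_lt c_gt0 u_bin) ->.
by rewrite sum_card_setI_lt mulnCA leq_mul2l binom_lt_div_le ?orbT.
Qed.

Lemma sum_agents_unfair_le (G : finType) c n (u : 'I_n -> G -> nat)
    (h : {set G} -> {set G}) :
  3 <= c -> (forall a, binary (u a)) -> injective h ->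
  2 ^ c * \sum_(S : {set G}) \sum_(a < n) (~~ mms_fair c (u a) (h S)) <= n * 2 ^ #|G|.
Proof.
move=> c_ge3 u_bin h_inj; rewrite exchange_big big_distrr /=.
rewrite -[n in n * _]card_ord -sum_nat_const; apply: leq_sum => a _.
by have := sum_unfair_sets_le c_ge3 (u_bin a); rewrite (reindex_inj h_inj).
Qed.

Lemma exists_le_average (T : finType) (F : T -> nat) b :
  0 < #|T| -> \sum_x F x <= #|T| * b -> exists x, F x <= b.
Proof.
move=> T_gt0 sum_le; apply/existsP; apply: contraLR sum_le => /existsPn all_gt.
rewrite -ltnNge; apply: leq_trans (_ : #|T| * b.+1 <= _); first by rewrite ltn_pmul2l.
by rewrite -sum_nat_const; apply: leq_sum => x _; rewrite ltnNge all_gt.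
Qed.

Lemma exists_both_le_mean (T : finType) (F1 F2 : T -> nat) p n1 n2 :
  0 < #|T| -> 0 < n1 -> 0 < n2 ->
  p.*2 * \sum_x F1 x <= n1 * #|T| -> p.*2 * \sum_x F2 x <= n2 * #|T| ->
  exists x, p * F1 x <= n1 /\ p * F2 x <= n2.
Proof.
move=> T_gt0 n1_gt0 n2_gt0 sum1 sum2.
have [x avg] : exists x, p.*2 * (n2 * F1 x + n1 * F2 x) <= 2 * n1 * n2.
  apply: exists_le_average => //.
  rewrite -big_distrr big_split -!big_distrr /= mulnDr (mulnCA _ n2) (mulnCA _ n1).
  apply: leq_trans (leq_add (leq_mul (leqnn n2) sum1) (leq_mul (leqnn n1) sum2)) _.
  by apply: eq_leq; set N := #|T|; nia.
by exists x; split; [rewrite -(leq_pmul2r n2_gt0) | rewrite -(leq_pmul2r n1_gt0)]; nia.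
Qed.

Lemma card_set_add_sum_neg (T : finType) (P : pred T) :
  #|[set x | P x]| + \sum_x (~~ P x) = #|T|.
Proof.
rewrite -(cardsC [set x | P x]); congr (_ + _).
by rewrite -sum1_card [RHS]big_mkcond; apply: eq_bigr => x _; rewrite !inE; case: (P x).
Qed.

Lemma card_sets (T : finType) : #|{set T}| = 2 ^ #|T|.
Proof. by rewrite -cardsT -(card_powerset [set: T]) powersetT cardsT. Qed.

Theorem mainTheorem8 (G : finType) (c n1 n2 : nat)
  (u1 : 'I_n1 -> G -> nat) (u2 : 'I_n2 -> G -> nat) :
  3 <= c -> 1 <= n1 -> 1 <= n2 ->
  (forall a, binary (u1 a)) -> (forall a, binary (u2 a)) ->
  exists G1 : {set G},
    (2 ^ c.-1 - 1) * n1 <= 2 ^ c.-1 * #|[set a | mms_fair c (u1 a) G1]|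
    /\ (2 ^ c.-1 - 1) * n2 <= 2 ^ c.-1 * #|[set a | mms_fair c (u2 a) (~: G1)]|.
Proof.
case: c => [//|k] c_ge3 n1_gt0 n2_gt0 u1_bin u2_bin.
have sets_gt0 : 0 < #|{set G}| by apply/card_gt0P; exists set0.
have := sum_agents_unfair_le c_ge3 u1_bin (@inj_id _).
have := sum_agents_unfair_le c_ge3 u2_bin (@setC_inj G).
rewrite -card_sets expnS mul2n => sum2 sum1.
have [S [f1_le f2_le]] := exists_both_le_mean sets_gt0 n1_gt0 n2_gt0 sum1 sum2.
exists S.
have := card_set_add_sum_neg (fun a => mms_fair k.+1 (u1 a) S).
have := card_set_add_sum_neg (fun a => mms_fair k.+1 (u2 a) (~: S)).
move: f1_le f2_le; rewrite !card_ord /=; set P := 2 ^ k; nia.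
Qed.
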